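(* Let $\mathcal{S}$ be a relational structure admitting an injective unary FA-presentation $(a^*,\phi)$, and let $R$ be a binary relation in the signature of $\mathcal{S}$. Let $R^*$ denote the reflexive and transitive closure of $R$. Then $\Lambda(R^*,\phi)=\{(u,v)\in a^*\times a^* : (u\phi,v\phi)\in R^*\}$ is regular. Hence $\mathcal{S}$ augmented by the relation $R^*$ is also unary FA-presentable.
   Context: For words $w_1,\dots,w_r$ over a finite alphabet $A$, $\mathrm{conv}(w_1,\dots,w_r)$ is the word over $(A\cup\{\$\})^r$ (with $\$\notin A$) whose $j$-th letter is the tuple of $j$-th letters of the $w_i$, shorter words being padded at the end with $\$$ up to the maximal length. A relation $X\subseteq (A^* )^r$ is regular if $\{\mathrm{conv}(w_1,\dots,w_r):(w_1,\dots,w_r)\in X\}$ is a regular language. An FA-presentation of a relational structure $\mathcal{S}=(S,R_1,\dots,R_n)$ is a pair $(L,\phi)$ with $L$ a regular language over a finite alphabet and $\phi:L\to S$ surjective such that for every relation $R\in\{=,R_1,\dots,R_n\}$ of arity $r$ the relation $\Lambda(R,\phi)=\{(w_1,\dots,w_r)\in L^r : R(w_1\phi,\dots,w_r\phi)\}$ is regular. It is unary if $L$ is over a one-letter alphabet $\{a\}$, and a structure is unary FA-presentable if it admits a unary FA-presentation. An injective unary FA-presentation $(a^*,\phi)$ is one with $L=a^*$ and $\phi$ injective (hence bijective). *)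

From Stdlib Require Import Relation_Operators.
From mathcomp Require Import all_boot.
Set Implicit Arguments. Unset Strict Implicit. Unset Printing Implicit Defensive.

Record dfa (Sigma : finType) := DFA {
  dfa_state : finType;
  dfa_start : dfa_state;
  dfa_final : pred dfa_state;
  dfa_trans : dfa_state -> Sigma -> dfa_state }.

Definition dfa_accepts (Sigma : finType) (M : dfa Sigma) (w : seq Sigma) : bool :=
  @dfa_final Sigma M (foldl (@dfa_trans Sigma M) (@dfa_start Sigma M) w).

Definition regular_lang (Sigma : finType) (L : seq Sigma -> Prop) : Prop :=
  exists M : dfa Sigma, forall w, L w <-> dfa_accepts M w.

(* The padded alphabet (A u {$})^r : None plays the role of the padding symbol $. *)
Definition conv_alph (A : finType) (r : nat) : finType := {ffun 'I_r -> option A}.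

Definition conv (A : finType) (r : nat) (ws : r.-tuple (seq A)) : seq (conv_alph A r) :=
  [seq [ffun k : 'I_r => nth None (map Some (tnth ws k)) j]
     | j <- iota 0 (\max_(k < r) size (tnth ws k))].

Definition regular_rel (A : finType) (r : nat) (X : r.-tuple (seq A) -> Prop) : Prop :=
  regular_lang (fun u : seq (conv_alph A r) => exists ws, X ws /\ u = conv ws).

Record signature := Signature { sym : finType; arity : sym -> nat }.

Definition relstruct (sig : signature) (S : Type) :=
  forall i : sym sig, (arity i).-tuple S -> Prop.

Definition Lambda (A : finType) (S : Type) (L : seq A -> Prop) (phi : seq A -> S)
  (r : nat) (R : r.-tuple S -> Prop) : r.-tuple (seq A) -> Prop :=
  fun ws => (forall k : 'I_r, L (tnth ws k)) /\ R (map_tuple phi ws).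

Definition eq_rel2 (S : Type) : 2.-tuple S -> Prop :=
  fun t => tnth t ord0 = tnth t (@Ordinal 2 1 isT).

(* (L, phi) is an FA-presentation of (S, rels); phi need only be meaningful on L. *)
Definition FA_presentation (A : finType) (sig : signature) (S : Type)
  (rels : relstruct sig S) (L : seq A -> Prop) (phi : seq A -> S) : Prop :=
  [/\ regular_lang L,
      (forall s : S, exists w, L w /\ phi w = s),
      regular_rel (Lambda L phi (@eq_rel2 S))
    & forall i : sym sig, regular_rel (Lambda L phi (rels i))].

Definition unary_FA_presentable (sig : signature) (S : Type) (rels : relstruct sig S) : Prop :=
  exists (A : finType) (L : seq A -> Prop) (phi : seq A -> S),
    #|A| = 1 /\ FA_presentation rels L phi.

Definition injective_unary_FA_presentation (A : finType) (sig : signature) (S : Type)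
  (rels : relstruct sig S) (phi : seq A -> S) : Prop :=
  [/\ #|A| = 1, FA_presentation rels (fun _ => True) phi & injective phi].

Definition binrel (sig : signature) (S : Type) (rels : relstruct sig S)
  (i : sym sig) (e : arity i = 2) : S -> S -> Prop :=
  fun x y => rels i (tcast (esym e) [tuple x; y]).

Definition rt_rel2 (S : Type) (R : S -> S -> Prop) : 2.-tuple S -> Prop :=
  fun t => clos_refl_trans S R (tnth t ord0) (tnth t (@Ordinal 2 1 isT)).

Definition aug_signature (sig : signature) : signature :=
  @Signature (option (sym sig))
    (fun o => match o with Some i => arity i | None => 2 end).

Definition aug_struct (sig : signature) (S : Type) (rels : relstruct sig S)
  (Q : 2.-tuple S -> Prop) : relstruct (aug_signature sig) S :=
  fun o => match o as o0 return (arity (s := aug_signature sig) o0).-tuple S -> Prop with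
           | Some i => rels i
           | None => Q
           end.

(* Identify [a^*] with [nat] through [m |-> a^m].  A binary relation on [nat]
   is regular on convolutions of unary words exactly when it is ultimately
   periodic: past a threshold [T], adding a period [p] to both arguments, or to
   the larger one once it exceeds the other by [T], does not change it.  Indeed
   a DFA reads the convolution of [a^m] and [a^n] as three constant blocks, along
   each of which its run is ultimately periodic; conversely the lengths of the
   blocks read so far, reduced modulo [(T, p)], give a right congruence of finite
   index.
   So it suffices that the reflexive-transitive closure [R*] of an ultimately
   periodic [R] is ultimately periodic, and by a Dickson-type stabilisation it
   is enough that [R*] is preserved by the shifts for some period.  A long path
   above [T] from [u] to [y] crosses the levels [u + 1 + i * p]; by pigeonhole
   two crossing edges sit alike relative to their levels (up to [T] and modulo
   [p]), and gluing one onto the other lifts the endpoint by a multiple of [p]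
   dividing [K`! * p].  Paths dipping below [T] are cut at their first or last
   low vertex. *)

From Stdlib Require Import Lia Classical ClassicalEpsilon Wf_nat.
From Stdlib Require Import Relation_Operators Operators_Properties.
From mathcomp Require Import all_boot zify.
Set Implicit Arguments. Unset Strict Implicit. Unset Printing Implicit Defensive.

#[local] Arguments rt_step {A R x y} _.
#[local] Arguments rt_refl {A R x}.
#[local] Arguments rt_trans {A R x y z} _ _.

(** * Ultimately periodic relations on [nat] *)

Lemma classic_ex_minn (P : nat -> Prop) :
  (exists n, P n) -> exists2 n, P n & forall m, P m -> n <= m.
Proof.
move=> exP; have [n [[Pn n_min] _]] :=
  dec_inh_nat_subset_has_unique_least_element P (fun n => classic (P n)) exP.
by exists n => // m /n_min/leP.
Qed.

Lemma pigeonhole_nat (F : finType) (f : nat -> F) n :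
  #|F| <= n -> exists i j, i < j <= n /\ f i = f j.
Proof.
move=> leFn; pose g (i : 'I_n.+1) := f i.
have /injectivePn[i [j neq_ij eq_fij]] : ~~ injectiveb g.
  by apply/injectiveP => /leq_card; rewrite card_ord; lia.
have lt_in := ltn_ord i; have lt_jn := ltn_ord j.
case: (ltngtP i j) => [lt_ij|lt_ji|/val_inj eq_ij]; last by rewrite eq_ij eqxx in neq_ij.
- by exists i, j; split => //; lia.
- by exists j, i; split => //; lia.
Qed.

Lemma upward_closed_nat (f : nat -> Prop) :
  (forall k, f k -> f k.+1) -> forall k m, k <= m -> f k -> f m.
Proof.
move=> fS k m /subnKC <-; elim: (m - k) => [|n IH] fk; first by rewrite addn0.
by rewrite addnS; apply/fS/IH.
Qed.

Lemma monotone_eventually_constant (f : nat -> Prop) :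
  (forall k, f k -> f k.+1) -> exists N, forall k, N <= k -> (f k <-> f k.+1).
Proof.
move=> fS; case: (classic (exists k, f k)) => [[N fN]|nf].
  exists N => k le_Nk; split=> _; first apply: (fS);
  by apply: (upward_closed_nat fS) fN; lia.
by exists 0 => k _; split=> fk; case: nf; [exists k | exists k.+1].
Qed.

Lemma uniform_threshold (Q : nat -> nat -> Prop) n :
  (forall i N N', N <= N' -> Q i N -> Q i N') ->
  (forall i, i < n -> exists N, Q i N) -> exists N, forall i, i < n -> Q i N.
Proof.
move=> Qup; elim: n => [|n IH] exQ; first by exists 0.
have [N1 QN1] := IH (fun i lt_in => exQ i (leqW lt_in)).
have [N2 QN2] := exQ n (ltnSn n).
exists (maxn N1 N2) => i; rewrite ltnS leq_eqVlt => /orP[/eqP->|lt_in].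
  exact: Qup (leq_maxr N1 N2) QN2.
exact: Qup (leq_maxl N1 N2) (QN1 i lt_in).
Qed.

(* Let the least column [v] of [U] be attained on row [l1]: from row [l1] on,
   [U] is the set of points right of [v], and each of the finitely many rows
   below [l1] is eventually constant. *)
Lemma monotone2_eventually_constant (U : nat -> nat -> Prop) :
  (forall k l, U k l -> U k.+1 l) -> (forall k l, U k l -> U k l.+1) ->
  exists N, forall k l,
    (N <= k -> (U k l <-> U k.+1 l)) /\ (N <= l -> (U k l <-> U k l.+1)).
Proof.
move=> Uk Ul.
have Umono k l k' l' : k <= k' -> l <= l' -> U k l -> U k' l'.
  move=> le_k le_l Ukl; apply: (upward_closed_nat (Ul k')) le_l _.
  exact: (upward_closed_nat (fun k => Uk k l)) le_k Ukl.
case: (classic (exists k l, U k l)) => [exU|noU]; last first.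
  by exists 0 => k l; split=> _; split=> HU; case: noU; do 2 eexists; exact: HU.
have [v [l1 Uvl1] v_min] := classic_ex_minn exU.
have Uhigh l k : l1 <= l -> (U k l <-> v <= k).
  move=> le_l; split=> [Ukl|le_v]; last exact: Umono le_v le_l Uvl1.
  by apply: v_min; exists l.
have [N1 N1P] : exists N, forall l, l < l1 -> forall k, N <= k -> (U k l <-> U k.+1 l).
  apply: uniform_threshold => [l N N' le_N HN k le_k|l _]; first by apply: HN; lia.
  exact: monotone_eventually_constant (fun k => Uk k l).
exists (maxn N1 (maxn l1 v)) => k l; split=> le_N.
- case: (ltnP l l1) => [lt_l|le_l]; first by apply: N1P => //; lia.
  by rewrite !Uhigh //; split=> _; lia.
- by rewrite !Uhigh //; lia.
Qed.

Definition ult_rep (t p z : nat) : nat := if z < t then z else t + (z - t) %% p.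
Definition ult_quot (t p z : nat) : nat := if z < t then 0 else (z - t) %/ p.
Definition ult_lift (t p j l : nat) : nat := if j < t then j else j + l * p.

Lemma ult_rep_lt t p z : 0 < p -> ult_rep t p z < t + p.
Proof.
by move=> p_gt0; rewrite /ult_rep; case: ifP => [|_]; [lia | rewrite ltn_add2l ltn_pmod].
Qed.

Lemma leq_ult_rep t p z : (t <= ult_rep t p z) = (t <= z).
Proof. by rewrite /ult_rep; case: (ltnP z t) => [/ltn_geF | _]; rewrite ?leq_addr. Qed.

Lemma ult_lift_rep t p z : ult_lift t p (ult_rep t p z) (ult_quot t p z) = z.
Proof.
rewrite /ult_lift /ult_quot /ult_rep; case: (ltnP z t) => [-> // | le_tz].
rewrite ifN; last by rewrite -leqNgt leq_addr.
by rewrite -addnA [_ %% p + _]addnC -divn_eq; lia.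
Qed.

Lemma ult_liftS t p j l : t <= j -> ult_lift t p j l.+1 = ult_lift t p j l + p.
Proof. by rewrite /ult_lift ltnNge => ->; rewrite mulSnr addnA. Qed.

Lemma ult_rep_addMn t p z : t <= z -> ult_rep t p z + ult_quot t p z * p = z.
Proof. by move=> le_tz; have := ult_lift_rep t p z; rewrite /ult_lift ltnNge leq_ult_rep le_tz. Qed.

Lemma ult_rep0 t p : ult_rep t p 0 = 0.
Proof. by rewrite /ult_rep; case: (posnP t) => [-> | //]; rewrite sub0n mod0n. Qed.

Lemma ult_rep_eq0 t p z : 0 < t -> (ult_rep t p z == 0) = (z == 0).
Proof.
move=> t_gt0; rewrite /ult_rep; case: ltnP => // le_tz.
by rewrite addn_eq0 (gtn_eqF t_gt0) (gtn_eqF (leq_trans t_gt0 le_tz)).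
Qed.

Lemma ult_rep_succ t p z z' :
  ult_rep t p z = ult_rep t p z' -> ult_rep t p z.+1 = ult_rep t p z'.+1.
Proof.
rewrite /ult_rep; case: (ltnP z t) => [lt_z | le_z]; case: (ltnP z' t) => [lt_z' | le_z'] eq_z.
- by rewrite eq_z.
- by move: lt_z; rewrite eq_z ltnNge leq_addr.
- by move: lt_z'; rewrite -eq_z ltnNge leq_addr.
have eq_mod := addnI eq_z.
rewrite !ltnNge !(leqW le_z) !(leqW le_z') /= !subSn //.
by rewrite -[(z - t).+1]addn1 -[(z' - t).+1]addn1 -modnDml eq_mod modnDml.
Qed.

Lemma ult_lift_decomposition t p N z : 0 < p ->
  exists j l, [/\ j < t + p, z = ult_lift t p j l & t + N * p <= z -> t <= j /\ N <= l].
Proof.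
move=> p_gt0; exists (ult_rep t p z), (ult_quot t p z).
split; [exact: ult_rep_lt | by rewrite ult_lift_rep |].
move=> le_z; rewrite leq_ult_rep /ult_quot ifN; last by rewrite -leqNgt; lia.
by split; [lia | rewrite leq_divRL //; lia].
Qed.

(* The lattice is cut into finitely many classes indexed by representatives [j],
   each class [l |-> ult_lift t p j l] being a single point if [j < t] and an
   arithmetic progression of step [p] otherwise. *)
Lemma monotone_shift_eventually_periodic (Y : nat -> nat -> Prop) t p : 0 < p ->
  (forall x d, t <= x -> Y x d -> Y (x + p) d) ->
  (forall x d, t <= d -> Y x d -> Y x (d + p)) ->
  exists T, forall x d,
    (T <= x -> (Y x d <-> Y (x + p) d)) /\ (T <= d -> (Y x d <-> Y x (d + p))).
Proof.
move=> p_gt0 Yx Yd.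
have [N NP] : exists N, forall i, i < t + p -> forall j, j < t + p -> forall k l,
    let Y' k' l' := Y (ult_lift t p i k') (ult_lift t p j l') in
    (N <= k -> (Y' k l <-> Y' k.+1 l)) /\ (N <= l -> (Y' k l <-> Y' k l.+1)).
  apply: uniform_threshold => [i N N' le_N HN j lt_j k l | i _].
    by split=> le; [apply: (HN j lt_j k l).1 | apply: (HN j lt_j k l).2]; lia.
  apply: uniform_threshold => [j N N' le_N HN k l | j _].
    by split=> le; [apply: (HN k l).1 | apply: (HN k l).2]; lia.
  apply: monotone2_eventually_constant => k l; rewrite /ult_lift.
  - by case: ltnP => // le_ti; rewrite mulSnr addnA; apply: Yx; lia.
  - by case: (ltnP j t) => // le_tj; rewrite mulSnr addnA; apply: Yd; lia.
exists (t + N * p) => x d.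
have [i [k [lt_i -> high_i]]] := @ult_lift_decomposition t p N x p_gt0.
have [j [l [lt_j -> high_j]]] := @ult_lift_decomposition t p N d p_gt0.
split=> far.
- by have [le_ti le_k] := high_i far; rewrite -ult_liftS //; apply: (NP i lt_i j lt_j k l).1.
- by have [le_tj le_l] := high_j far; rewrite -ult_liftS //; apply: (NP i lt_i j lt_j k l).2.
Qed.

Definition ult_periodic (X : nat -> nat -> Prop) (T p : nat) : Prop :=
  [/\ 0 < p,
      forall x y, T <= x -> T <= y -> (X x y <-> X (x + p) (y + p)),
      forall x y, x + T <= y -> (X x y <-> X x (y + p))
    & forall x y, y + T <= x -> (X x y <-> X (x + p) y)].

Lemma ult_periodic_ext (X Y : nat -> nat -> Prop) T p :
  (forall x y, X x y <-> Y x y) -> ult_periodic X T p -> ult_periodic Y T p.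
Proof. by move=> XY [p_gt0 XD Xr Xl]; split=> // x y le; rewrite -!XY; auto. Qed.

Lemma ult_periodic_leq X T T' p : T <= T' -> ult_periodic X T p -> ult_periodic X T' p.
Proof.
by move=> le_T [p_gt0 XD Xr Xl]; split=> // x y *; [apply: XD | apply: Xr | apply: Xl]; lia.
Qed.

Lemma ult_periodic_transp X T p : ult_periodic X T p -> ult_periodic (fun x y => X y x) T p.
Proof. by case=> p_gt0 XD Xr Xl; split=> // x y *; [apply: XD | apply: Xl | apply: Xr]. Qed.

Section UltPeriodicTheory.
Variables (X : nat -> nat -> Prop) (T p : nat).
Hypothesis Xper : ult_periodic X T p.

Lemma ult_periodicD m x y : T <= x -> T <= y -> X x y <-> X (x + m * p) (y + m * p).
Proof.
case: Xper => _ XD _ _ le_x le_y; elim: m => [|m IH]; first by rewrite !addn0.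
by rewrite IH !mulSnr !addnA; apply: XD; lia.
Qed.

Lemma ult_periodicr m x y : x + T <= y -> X x y <-> X x (y + m * p).
Proof.
case: Xper => _ _ Xr _ le_xy; elim: m => [|m IH]; first by rewrite addn0.
by rewrite IH mulSnr addnA; apply: Xr; lia.
Qed.

Lemma ult_periodicl m x y : y + T <= x -> X x y <-> X (x + m * p) y.
Proof.
case: Xper => _ _ _ Xl le_yx; elim: m => [|m IH]; first by rewrite addn0.
by rewrite IH mulSnr addnA; apply: Xl; lia.
Qed.

Lemma ult_periodic_rep x d : X x (x + d) <-> X (ult_rep T p x) (ult_rep T p x + ult_rep T p d).
Proof.
have -> : X x (x + d) <-> X (ult_rep T p x) (ult_rep T p x + d).
  case: (ltnP x T) => [lt_x | le_x]; first by rewrite /ult_rep lt_x.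
  rewrite -{1 2}(ult_rep_addMn p le_x) addnAC; symmetry.
  by apply: ult_periodicD; rewrite ?(leq_trans _ (leq_addr _ _)) ?leq_ult_rep.
case: (ltnP d T) => [lt_d | le_d]; first by rewrite /ult_rep lt_d.
rewrite -{1}(ult_rep_addMn p le_d) addnA; symmetry; apply: ult_periodicr.
by rewrite leq_add2l leq_ult_rep.
Qed.

End UltPeriodicTheory.

(* Above and below the diagonal, [X] is read in the coordinates
   (position, distance to the diagonal), where the three shift conditions
   become the two of [monotone_shift_eventually_periodic]. *)
Lemma ult_periodic_of_monotone (X : nat -> nat -> Prop) t p : 0 < p ->
  (forall x y, t <= x -> t <= y -> X x y -> X (x + p) (y + p)) ->
  (forall x y, x + t <= y -> X x y -> X x (y + p)) ->
  (forall x y, y + t <= x -> X x y -> X (x + p) y) ->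
  exists T, ult_periodic X T p.
Proof.
move=> p_gt0 XD Xr Xl.
have [T1 upper] := @monotone_shift_eventually_periodic (fun x d => X x (x + d)) t p p_gt0
  (fun x d le_x Xxd => ltac:(rewrite /= addnAC; apply: XD => //; lia))
  (fun x d le_d Xxd => ltac:(rewrite /= addnA; apply: Xr => //; lia)).
have [T2 lower] := @monotone_shift_eventually_periodic (fun y d => X (y + d) y) t p p_gt0
  (fun y d le_y Xyd => ltac:(rewrite /= addnAC; apply: XD => //; lia))
  (fun y d le_d Xyd => ltac:(rewrite /= addnA; apply: Xl => //; lia)).
exists (maxn T1 T2); split=> // x y.
- move=> le_x le_y; case: (leqP x y) => [le_xy | /ltnW le_yx].
  + by rewrite -(subnKC le_xy) addnAC; apply: (upper x (y - x)).1; lia.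
  + by rewrite -(subnKC le_yx) addnAC; apply: (lower y (x - y)).1; lia.
- move=> far; have le_xy : x <= y by lia.
  by rewrite -(subnKC le_xy) -addnA; apply: (upper x (y - x)).2; lia.
- move=> far; have le_yx : y <= x by lia.
  by rewrite -(subnKC le_yx) -addnA; apply: (lower y (x - y)).2; lia.
Qed.

(** * The reflexive-transitive closure of an ultimately periodic relation *)

Definition rel_above (T : nat) (R : nat -> nat -> Prop) (x y : nat) : Prop :=
  [/\ T <= x, T <= y & R x y].

Definition crossing_sig (T p a b L : nat) : nat * nat * nat :=
  (minn (L - a) T, minn (b - L) T, (b - L) %% p).

Section Pumping.
Variables (R : nat -> nat -> Prop) (T p : nat).
Hypothesis p_gt0 : 0 < p.
Hypothesis R_shift : forall x y, T <= x -> T <= y -> R x y -> R (x + p) (y + p).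
Hypothesis R_mod :
  forall a b b', a + T <= b -> a + T <= b' -> b = b' %[mod p] -> R a b -> R a b'.

Local Notation C := (clos_refl_trans nat (rel_above T R)).

Lemma above_shift m x y : C x y -> C (x + m * p) (y + m * p).
Proof.
elim=> [a b [le_a le_b Rab] | a | a b c _ Cab _ Cbc]; last exact: rt_trans Cab Cbc.
- apply: rt_step; split; rewrite ?(leq_trans _ (leq_addr _ _)) //.
  elim: m => [|m IH]; first by rewrite !addn0.
  by rewrite !mulSnr !addnA; apply: R_shift; rewrite ?(leq_trans _ (leq_addr _ _)).
- exact: rt_refl.
Qed.

Lemma first_crossing u y L : C u y -> u < L <= y ->
  exists a b, [/\ C u a, a < L <= b, rel_above T R a b & C b y].
Proof.
move/clos_rt_rt1n_iff; elim=> [x | x w z Rxw Cwz IH] /andP[lt_u le_y]; first lia.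
case: (leqP L w) => [le_w | lt_w].
  by exists x, w; split; rewrite ?lt_u ?le_w //; [exact: rt_refl | exact/clos_rt_rt1n_iff].
have [a [b [Cwa cross Rab Cby]]] := IH (ltac:(lia)).
by exists a, b; split=> //; apply: rt_trans (rt_step Rxw) Cwa.
Qed.

(* [(a i, b i)] is the first edge of the path crossing the level [L + i * p]. *)
Lemma level_crossings n u y L : C u y -> u < L -> L + n * p <= y ->
  exists a b : nat -> nat, forall i, i <= n ->
    [/\ a i < L + i * p <= b i, rel_above T R (a i) (b i), C u (a i) & C (b i) y] /\
    forall j, i < j <= n -> (a i = a j /\ b i = b j) \/ C (b i) (a j).
Proof.
elim/ltn_ind: n u y L => n IH u y L Cuy lt_uL le_y.
have [a0 [b0 [Cua0 cross0 R0 Cb0y]]] := first_crossing (L := L) Cuy (ltac:(lia)).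
set k := (b0 - L) %/ p.
have le_k : k * p <= b0 - L := leq_divM _ _.
have lt_k : b0 - L < k.+1 * p := ltn_ceil _ p_gt0.
case: (leqP n k) => [le_nk | lt_kn].
  exists (fun=> a0), (fun=> b0) => i le_i; split=> [|j _]; last by left.
  have : i * p <= k * p by rewrite leq_mul2r (leq_trans le_i le_nk) orbT.
  by split=> //; lia.
have [a' [b' crossP]] := IH (n - k.+1) (ltac:(lia)) b0 y (L + k.+1 * p) Cb0y
  (ltac:(lia)) (ltac:(rewrite -addnA -mulnDl subnKC //)).
exists (fun i => if i <= k then a0 else a' (i - k.+1)).
exists (fun i => if i <= k then b0 else b' (i - k.+1)) => i le_i /=.
case: (leqP i k) => [le_ik | lt_ki].
  have : i * p <= k * p by rewrite leq_mul2r le_ik orbT.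
  move=> le_ip; split; first by split=> //; lia.
  move=> j /andP[_ le_j]; case: (leqP j k) => [_ | lt_kj]; first by left.
  by right; have [[_ _ ?]] := crossP (j - k.+1) (ltac:(lia)).
have [[cross' R' Cua' Cb'y] later] := crossP (i - k.+1) (ltac:(lia)).
have E : L + k.+1 * p + (i - k.+1) * p = L + i * p by rewrite -addnA -mulnDl subnKC.
rewrite E in cross'; split; first by split=> //; apply: rt_trans Cua0 (rt_trans (rt_step R0) Cua').
move=> j /andP[lt_ij le_j]; have -> : (j <= k) = false by lia.
by apply: later; lia.
Qed.

(* If the crossing edges agree in their distances to the levels up to [T] and
   in the residue of their overshoot, one edge can be glued to the other
   one's level by [R_mod]. *)
Lemma R_same_crossing_sig ai bi aj bj Li Lj :
  ai < Li <= bi -> aj < Lj <= bj -> Li <= Lj ->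
  crossing_sig T p ai bi Li = crossing_sig T p aj bj Lj -> R aj bj -> R aj (bi + (Lj - Li)).
Proof.
move=> cross_i cross_j le_L [sig1 sig2 sig3] Rj.
have mod_j : bj = bi + (Lj - Li) %[mod p].
  have -> : bi + (Lj - Li) = (bi - Li) + Lj by lia.
  by rewrite -[in LHS](subnK (_ : Lj <= bj)) ?(andP cross_j).2 // -modnDml -sig3 modnDml.
case: (ltnP (Lj - aj) T) => far_a; case: (ltnP (bj - Lj) T) => far_b.
- by have -> : bi + (Lj - Li) = bj by lia.
all: by apply: R_mod mod_j Rj; lia.
Qed.

Lemma pump_same_crossing_sig u ai bi aj bj Li q :
  ai < Li <= bi -> aj < Li + q * p <= bj -> 0 < q ->
  rel_above T R ai bi -> rel_above T R aj bj -> C u ai ->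
  (ai = aj /\ bi = bj) \/ C bi aj ->
  crossing_sig T p ai bi Li = crossing_sig T p aj bj (Li + q * p) ->
  forall m, C u (bi + m * (q * p)).
Proof.
move=> cross_i cross_j q_gt0 [le_ai le_bi Ri] [le_aj le_bj Rj] Cuai.
have lt_L : Li < Li + q * p by rewrite -addn1 leq_add2l muln_gt0 q_gt0.
have /andP[lt_ai le_Li] := cross_i.
case=> [[<- <-] | Cbiaj] eq_sig m.
  have far : ai + T <= Li.
    by move: eq_sig => -[+ _ _]; rewrite /minn; case: ifP; case: ifP; lia.
  apply: rt_trans Cuai (rt_step _); split=> //; first lia.
  by apply: R_mod Ri; [lia | lia | rewrite mulnA [bi + _]addnC modnMDl].
have step : C bi (bi + q * p).
  have := R_same_crossing_sig cross_i cross_j (ltnW lt_L) eq_sig Rj.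
  rewrite addKn => Rjump; apply: rt_trans Cbiaj (rt_step _); split=> //; lia.
elim: m => [|m IH]; first by rewrite addn0; apply: rt_trans Cuai (rt_step _).
apply: rt_trans IH _; rewrite mulSnr addnA mulnA addnAC.
exact: (@above_shift (m * q) _ _ step).
Qed.

(* Two of the [K.+1] crossings share their signature; splicing between them
   closes a cycle of length [(j - i) * p], and [j - i] divides [K`!]. *)
Lemma pump_up K u y : T.+1 * T.+1 * p.+1 <= K -> C u y -> u + K * p < y -> C u (y + K`! * p).
Proof.
move=> le_K Cuy lt_y.
have [a [b crossP]] := @level_crossings K u y u.+1 Cuy (ltnSn u) lt_y.
pose sig i := crossing_sig T p (a i) (b i) (u.+1 + i * p).
have [i [j [/andP[lt_ij le_jK] eq_sig]]] : exists i j, i < j <= K /\ sig i = sig j.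
  pose enc (s : nat * nat * nat) : 'I_T.+1 * 'I_T.+1 * 'I_p.+1 :=
    (inord s.1.1, inord s.1.2, inord s.2).
  have [i [j [lt_ij]]] := @pigeonhole_nat _ (fun i => enc (sig i)) K
    (ltac:(by rewrite !card_prod !card_ord)).
  rewrite /enc /sig /crossing_sig.
  move=> -[/(congr1 (@nat_of_ord _)) + /(congr1 (@nat_of_ord _)) + /(congr1 (@nat_of_ord _))].
  rewrite !inordK ?ltnS ?geq_minr ?(ltnW (ltn_pmod _ p_gt0)) // => e1 e2 e3.
  by exists i, j; split=> //; rewrite /sig /crossing_sig e1 e2 e3.
have [[cross_i R_i Cuai Cbiy] later] := crossP i (ltnW (leq_trans lt_ij le_jK)).
have [[cross_j R_j _ _] _] := crossP j le_jK.
have L_j : u.+1 + j * p = u.+1 + i * p + (j - i) * p.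
  by rewrite -addnA -mulnDl subnKC // ltnW.
rewrite /sig L_j in eq_sig; rewrite L_j in cross_j.
have pump := pump_same_crossing_sig cross_i cross_j (ltac:(by rewrite subn_gt0))
  R_i R_j Cuai (later j (ltac:(by rewrite lt_ij))) eq_sig.
have /dvdnP[c def_c] : (j - i) %| K`! by apply: dvdn_fact; rewrite subn_gt0 lt_ij /=; lia.
rewrite def_c -mulnA; apply: rt_trans (pump c) _.
by rewrite mulnA; apply: (@above_shift (c * (j - i))).
Qed.

End Pumping.

Lemma clos_rt_transp (A : Type) (R S : A -> A -> Prop) x y :
  (forall x y, R x y -> S y x) -> clos_refl_trans A R x y -> clos_refl_trans A S y x.
Proof.
move=> RS; elim=> [a b /RS | a | a b c _ IH1 _ IH2]; last exact: rt_trans IH2 IH1.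
  exact: rt_step.
exact: rt_refl.
Qed.

Lemma clos_rt_above T R x y :
  clos_refl_trans nat (rel_above T R) x y -> clos_refl_trans nat R x y.
Proof.
elim=> [a b [_ _ Rab] | a | a b c _ IH1 _ IH2]; last exact: rt_trans IH1 IH2.
  exact: rt_step.
exact: rt_refl.
Qed.

Lemma clos_rt_last_below T R u y : clos_refl_trans nat R u y -> T <= y ->
  (T <= u /\ clos_refl_trans nat (rel_above T R) u y) \/
  exists s z, [/\ s < T, clos_refl_trans nat R u s, R s z, T <= z &
                  clos_refl_trans nat (rel_above T R) z y].
Proof.
move/clos_rt_rt1n_iff; elim=> [a | a w c Raw _ IH] le_y; first by left; split=> //; exact: rt_refl.
case: (IH le_y) => [[le_w Cwc] | [s [z [lt_s Rws Rsz le_z Czc]]]].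
- case: (leqP T a) => [le_a | lt_a]; last by right; exists a, w; split=> //; exact: rt_refl.
  by left; split=> //; apply: rt_trans (rt_step _) Cwc.
- by right; exists s, z; split=> //; apply: rt_trans (rt_step Raw) Rws.
Qed.

Lemma clos_rt_first_below T R u y : clos_refl_trans nat R u y -> T <= u ->
  (T <= y /\ clos_refl_trans nat (rel_above T R) u y) \/
  exists z s, [/\ T <= z, clos_refl_trans nat (rel_above T R) u z, R z s, s < T &
                  clos_refl_trans nat R s y].
Proof.
move/clos_rt_rtn1_iff; elim=> [| w c Rwc _ IH] le_u; first by left; split=> //; exact: rt_refl.
case: (IH le_u) => [[le_w Cuw] | [z [s [le_z Cuz Rzs lt_s Rsw]]]].
- case: (leqP T c) => [le_c | lt_c]; last by right; exists w, c; split=> //; exact: rt_refl.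
  by left; split=> //; apply: rt_trans Cuw (rt_step _).
- by right; exists z, s; split=> //; apply: rt_trans Rsw (rt_step Rwc).
Qed.

Lemma eq_mod_leq_addMn b b' p : b <= b' -> b = b' %[mod p] -> exists q, b' = b + q * p.
Proof.
move=> le_b eq_b; have /dvdnP[q def_q] : p %| b' - b by rewrite -eqn_mod_dvd // eq_b.
by exists q; rewrite -def_q subnKC.
Qed.

Lemma ult_periodic_shift X T p :
  ult_periodic X T p -> forall x y, T <= x -> T <= y -> X x y -> X (x + p) (y + p).
Proof. by case=> _ XD _ _ x y le_x le_y /(XD _ _ le_x le_y). Qed.

Lemma ult_periodic_mod X T p : ult_periodic X T p ->
  forall a b b', a + T <= b -> a + T <= b' -> b = b' %[mod p] -> X a b -> X a b'.
Proof.
move=> Xper a b b' far_b far_b' eq_b; case: (leqP b b') => [le_b | /ltnW le_b'].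
  by have [q ->] := eq_mod_leq_addMn le_b eq_b; exact: (ult_periodicr Xper q far_b).1.
by have [q ->] := eq_mod_leq_addMn le_b' (esym eq_b); exact: (ult_periodicr Xper q far_b').2.
Qed.

Section ClosurePeriodic.
Variables (R : nat -> nat -> Prop) (T p : nat).
Hypothesis Rper : ult_periodic R T p.

Variable K : nat.
Hypothesis le_K : T.+1 * T.+1 * p.+1 <= K.

Local Notation R_star := (clos_refl_trans nat R).
Local Notation C := (clos_refl_trans nat (rel_above T R)).
Let P := K`! * p.
(* An edge leaving a vertex below [T] either is long enough for [ult_periodicr]
   or ends below [T + T], where [C_pump_up] applies to targets beyond [D]. *)
Let D := T + T + K * p.

Let p_gt0 : 0 < p. Proof. by case: Rper. Qed.
Let Rt_per := ult_periodic_transp Rper.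

Let C_shift x y : C x y -> C (x + P) (y + P).
Proof. exact: (above_shift (ult_periodic_shift Rper) K`!). Qed.

Let C_pump_up u y : C u y -> u + K * p < y -> C u (y + P).
Proof. exact: (pump_up p_gt0 (ult_periodic_shift Rper) (ult_periodic_mod Rper) le_K). Qed.

Let C_pump_down u y : C y u -> u + K * p < y -> C (y + P) u.
Proof.
move=> Cyu lt_y.
apply: (clos_rt_transp (R := rel_above T (fun x y => R y x))); first by move=> x z [].
apply: (pump_up p_gt0 (ult_periodic_shift Rt_per) (ult_periodic_mod Rt_per) le_K) lt_y.
by apply: clos_rt_transp Cyu => x z [].
Qed.

Let star_pump_from_below s z y :
  s < T -> R s z -> T <= z -> C z y -> D < y -> R_star s (y + P).
Proof.
move=> lt_s Rsz le_z Czy lt_y; case: (leqP (s + T) z) => [far_z | near_z].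
  apply: rt_trans (rt_step ((ult_periodicr Rper K`! far_z).1 Rsz)) (clos_rt_above _).
  exact: C_shift.
by apply: rt_trans (rt_step Rsz) (clos_rt_above (C_pump_up Czy _)); lia.
Qed.

Let star_pump_to_below x z s :
  s < T -> T <= z -> C x z -> R z s -> D < x -> R_star (x + P) s.
Proof.
move=> lt_s le_z Cxz Rzs lt_x; case: (leqP (s + T) z) => [far_z | near_z].
  apply: rt_trans (clos_rt_above _) (rt_step ((ult_periodicl Rper K`! far_z).1 Rzs)).
  exact: C_shift.
by apply: rt_trans (clos_rt_above (C_pump_down Cxz _)) (rt_step Rzs); lia.
Qed.

Let star_shift_up x y : x + D < y -> R_star x y -> R_star x (y + P).
Proof.
move=> far Rxy; have le_y : T <= y by lia.
case: (clos_rt_last_below Rxy le_y) => [[le_x Cxy] | [s [z [lt_s Rxs Rsz le_z Czy]]]].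
  by apply/clos_rt_above/C_pump_up => //; lia.
by apply: rt_trans Rxs (star_pump_from_below lt_s Rsz le_z Czy _); lia.
Qed.

Let star_shift_down x y : y + D < x -> R_star x y -> R_star (x + P) y.
Proof.
move=> far Rxy; have le_x : T <= x by lia.
case: (clos_rt_first_below Rxy le_x) => [[le_y Cxy] | [z [s [le_z Cxz Rzs lt_s Rsy]]]].
  by apply/clos_rt_above/C_pump_down => //; lia.
by apply: rt_trans (star_pump_to_below lt_s le_z Cxz Rzs _) Rsy; lia.
Qed.

Let star_shiftD x y : T + D < x -> T + D < y -> R_star x y -> R_star (x + P) (y + P).
Proof.
move=> lt_x lt_y Rxy; have le_x : T <= x by lia.
case: (clos_rt_first_below Rxy le_x) => [[_ Cxy] | [z [s [le_z Cxz Rzs lt_s Rsy]]]].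
  exact/clos_rt_above/C_shift.
by apply: rt_trans (star_pump_to_below lt_s le_z Cxz Rzs _) (star_shift_up _ Rsy); lia.
Qed.

Lemma ult_periodic_clos_rt_fact : exists T', ult_periodic R_star T' P.
Proof.
apply: (@ult_periodic_of_monotone _ (T + D).+1) => [| x y le_x le_y | x y le | x y le].
- by rewrite muln_gt0 fact_gt0.
- by apply: star_shiftD; lia.
- by apply: star_shift_up; lia.
- by apply: star_shift_down; lia.
Qed.

End ClosurePeriodic.

Theorem ult_periodic_clos_rt R T p :
  ult_periodic R T p -> exists T' p', ult_periodic (clos_refl_trans nat R) T' p'.
Proof.
move=> Rper; have [T' star_per] := ult_periodic_clos_rt_fact Rper (leqnn (T.+1 * T.+1 * p.+1)).
by exists T', ((T.+1 * T.+1 * p.+1)`! * p).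
Qed.

(** * Regular binary relations on a unary alphabet *)

(* The easy half of the Myhill--Nerode theorem: a right congruence of finite
   index saturating [L] yields a DFA, whose states are its classes. *)
Lemma regular_of_finite_congruence (Sig F : finType) (L : seq Sig -> Prop) (f : seq Sig -> F) :
  (forall w w' l, f w = f w' -> f (rcons w l) = f (rcons w' l)) ->
  (forall w w', f w = f w' -> L w -> L w') -> regular_lang L.
Proof.
move=> f_rcons f_L.
pose pick q := epsilon (inhabits [::]) (fun w => f w = q).
have pickK w : f (pick (f w)) = f w.
  by apply: (epsilon_spec (inhabits [::]) (fun w' => f w' = f w)); exists w.
pose final q := if excluded_middle_informative (L (pick q)) then true else false.
exists (DFA (f [::]) final (fun q l => f (rcons (pick q) l))) => w.
rewrite /dfa_accepts /=.
have -> : foldl (fun q l => f (rcons (pick q) l)) (f [::]) w = f w.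
  by elim/last_ind: w => [|w l IH] //; rewrite foldl_rcons IH; apply: f_rcons.
rewrite /final; case: excluded_middle_informative => [Lpick | nLpick].
  by split=> // _; apply: f_L Lpick; rewrite pickK.
by split=> // Lw; case: nLpick; apply: f_L Lw; rewrite pickK.
Qed.

Lemma map_const_in (T : eqType) (U : Type) (f : T -> U) c s :
  {in s, forall x, f x = c} -> map f s = nseq (size s) c.
Proof.
elim: s => //= x s IH fc; rewrite fc ?mem_head // IH // => y ys.
by apply: fc; rewrite inE ys orbT.
Qed.

Lemma foldl_nseq (T S : Type) (f : S -> T -> S) s k x :
  foldl f s (nseq k x) = iter k (f^~ x) s.
Proof. by elim: k s => //= k IH s; rewrite IH -iterSr. Qed.

Lemma rcons_nseq (T : Type) k (x : T) : rcons (nseq k x) x = nseq k.+1 x.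
Proof. by elim: k => //= k ->. Qed.

Lemma iter_add_fact_card (Q : finType) (f : Q -> Q) q n :
  #|Q| <= n -> iter (n + #|Q|`!) f q = iter n f q.
Proof.
move=> le_n.
have [i [j [/andP[lt_ij le_j] eq_ij]]] := @pigeonhole_nat _ (fun k => iter k f q) #|Q| (leqnn _).
have period k : i <= k -> iter (k + (j - i)) f q = iter k f q.
  move=> le_ik; have -> : k + (j - i) = (k - i) + j by lia.
  by rewrite iterD -eq_ij -iterD subnK.
have /dvdnP[c ->] : (j - i) %| #|Q|`! by apply: dvdn_fact; lia.
elim: c => [|c IH]; first by rewrite addn0.
by rewrite mulSnr addnA period ?IH //; lia.
Qed.

Lemma ult_periodic_iter_blocks (Q : finType) (g1 g2 g3 : Q -> Q) (q0 : Q) (P : pred Q) :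
  ult_periodic (fun m n => P (iter (n - m) g3 (iter (m - n) g2 (iter (minn m n) g1 q0))))
    #|Q| #|Q|`!.
Proof.
split=> [|x y le_x le_y | x y far | x y far]; first exact: fact_gt0.
- have [-> -> ->] : [/\ y + #|Q|`! - (x + #|Q|`!) = y - x, x + #|Q|`! - (y + #|Q|`!) = x - y
                     & minn (x + #|Q|`!) (y + #|Q|`!) = minn x y + #|Q|`!] by split; lia.
  by rewrite iter_add_fact_card //; lia.
- have [-> -> ->] : [/\ minn x (y + #|Q|`!) = minn x y, x - (y + #|Q|`!) = x - y
                     & y + #|Q|`! - x = (y - x) + #|Q|`!] by split; lia.
  by rewrite iter_add_fact_card //; lia.
- have [-> -> ->] : [/\ minn (x + #|Q|`!) y = minn x y, y - (x + #|Q|`!) = y - x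
                     & x + #|Q|`! - y = (x - y) + #|Q|`!] by split; lia.
  by rewrite [iter (x - y + _) _ _]iter_add_fact_card //; lia.
Qed.

Section UnaryConvolution.
Variables (A : finType) (a : A).

Definition letter2 (b0 b1 : bool) : conv_alph A 2 :=
  [ffun k : 'I_2 => if (if val k == 0 then b0 else b1) then Some a else None].

Definition conv2 m n := conv [tuple nseq m a; nseq n a].

(* A convolution of unary words: a common part of length [c], then an
   overhang of length [d0] in the first or of length [d1] in the second word. *)
Definition blocks c d0 d1 :=
  nseq c (letter2 true true) ++ nseq d0 (letter2 true false) ++ nseq d1 (letter2 false true).

Lemma conv2_iota m n : conv2 m n = [seq letter2 (j < m) (j < n) | j <- iota 0 (maxn m n)].
Proof.
rewrite /conv2 /conv big_ord_recl big_ord_recl big_ord0 maxn0 !(tnth_nth [::]) /= !size_nseq.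
apply: eq_map => j; apply/ffunP => k; rewrite !ffunE.
by case: k => [[|[|//]] lt_k] /=; rewrite (tnth_nth [::]) /= map_nseq nth_nseq.
Qed.

Lemma conv2_blocks m n : conv2 m n = blocks (minn m n) (m - n) (n - m).
Proof.
rewrite conv2_iota /blocks; case: (leqP m n) => [le_mn | /ltnW le_nm].
- have -> : iota 0 n = iota 0 m ++ iota m (n - m).
    by rewrite -[in LHS](subnKC le_mn) iotaD add0n.
  rewrite (_ : m - n = 0) /=; last lia.
  rewrite map_cat (@map_const_in _ _ _ (letter2 true true))
    ?(@map_const_in _ _ _ (letter2 false true)) ?size_iota // => j; rewrite mem_iota.
    by rewrite subnKC // => /andP[le_mj ->]; rewrite ltnNge le_mj.
  by rewrite add0n => /andP[_ lt_jm]; rewrite lt_jm (leq_trans lt_jm le_mn).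
- have -> : iota 0 m = iota 0 n ++ iota n (m - n).
    by rewrite -[in LHS](subnKC le_nm) iotaD add0n.
  rewrite (_ : n - m = 0) ?cats0; last lia.
  rewrite map_cat (@map_const_in _ _ _ (letter2 true true))
    ?(@map_const_in _ _ _ (letter2 true false)) ?size_iota // => j; rewrite mem_iota.
    by rewrite subnKC // => /andP[le_nj ->]; rewrite ltnNge le_nj.
  by rewrite add0n => /andP[_ lt_jn]; rewrite lt_jn (leq_trans lt_jn le_nm).
Qed.

(* [parse] follows the prefixes of the words [blocks c d0 d1], with [None] as
   the rejecting sink. *)
Definition parse_step (s : option (nat * nat * nat)) (l : conv_alph A 2) :=
  let l : {ffun 'I_2 -> option A} := l in
  if s is Some (c, d0, d1) then
    match l ord0 != None, l ord_max != None with
    | true, true => if (d0 == 0) && (d1 == 0) then Some (c.+1, 0, 0) else None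
    | true, false => if d1 == 0 then Some (c, d0.+1, 0) else None
    | false, true => if d0 == 0 then Some (c, 0, d1.+1) else None
    | false, false => None
    end
  else None.

Definition parse (w : seq (conv_alph A 2)) := foldl parse_step (Some (0, 0, 0)) w.

Lemma parse_blocks c d0 d1 : d0 = 0 \/ d1 = 0 -> parse (blocks c d0 d1) = Some (c, d0, d1).
Proof.
have run_common k c' :
    iter k (parse_step^~ (letter2 true true)) (Some (c', 0, 0)) = Some (c' + k, 0, 0).
  by elim: k => [|k IH]; rewrite ?addn0 // iterS IH /parse_step !ffunE /= addnS.
have run_left k c' d :
    iter k (parse_step^~ (letter2 true false)) (Some (c', d, 0)) = Some (c', d + k, 0).
  by elim: k => [|k IH]; rewrite ?addn0 // iterS IH /parse_step !ffunE /= addnS.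
have run_right k c' d :
    iter k (parse_step^~ (letter2 false true)) (Some (c', 0, d)) = Some (c', 0, d + k).
  by elim: k => [|k IH]; rewrite ?addn0 // iterS IH /parse_step !ffunE /= addnS.
rewrite /parse /blocks !foldl_cat !foldl_nseq run_common run_left.
by case=> ->; rewrite /= ?run_right.
Qed.

Hypothesis unary : forall x : A, x = a.

Lemma letter2_unary (l : conv_alph A 2) : exists b0 b1, l = letter2 b0 b1.
Proof.
pose l' : {ffun 'I_2 -> option A} := l.
exists (l' ord0 != None), (l' ord_max != None); apply/ffunP => k; rewrite ffunE.
have l'_unary i : l' i = if l' i != None then Some a else None.
  by case: (l' i) => // x; rewrite [x]unary.
by case: k => [[|[|//]] lt_k]; rewrite /= -l'_unary; congr (l' _); apply: val_inj.
Qed.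

Lemma parse_inv w c d0 d1 :
  parse w = Some (c, d0, d1) -> (d0 = 0 \/ d1 = 0) /\ w = blocks c d0 d1.
Proof.
elim/last_ind: w c d0 d1 => [|w l IH] c d0 d1; first by case=> <- <- <-; split=> //; left.
rewrite /parse foldl_rcons -/(parse w); have [b0 [b1 ->]] := letter2_unary l.
case: (parse w) IH => [[[c' d0'] d1'] /(_ _ _ _ erefl) [_ ->] | //].
rewrite /parse_step !ffunE /blocks; case: b0; case: b1 => //=.
- case: ifP => // /andP[/eqP-> /eqP->] [<- <- <-].
  by rewrite /= !cats0 rcons_nseq; split=> //; left.
- case: ifP => // /eqP-> [<- <- <-].
  by rewrite /= !cats0 rcons_cat rcons_nseq; split=> //; right.
- case: ifP => // /eqP-> [<- <- <-].
  by rewrite /= rcons_cat rcons_nseq; split=> //; left.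
Qed.

Lemma parse_conv2 m n : parse (conv2 m n) = Some (minn m n, m - n, n - m).
Proof. by rewrite conv2_blocks parse_blocks //; lia. Qed.

Lemma conv2_inj m n m' n' : conv2 m n = conv2 m' n' -> m = m' /\ n = n'.
Proof. by move/(congr1 parse); rewrite !parse_conv2 => -[]; lia. Qed.

Lemma seq_unary (w : seq A) : w = nseq (size w) a.
Proof. by elim: w => //= x w {1}->; rewrite [x]unary. Qed.

Lemma tuple2_unary (ws : 2.-tuple (seq A)) :
  ws = [tuple nseq (size (tnth ws ord0)) a; nseq (size (tnth ws ord_max)) a].
Proof.
apply: eq_from_tnth => -[[|[|//]] lt_i]; rewrite [RHS](tnth_nth [::]) /= -seq_unary;
  by congr tnth; apply: val_inj.
Qed.

Lemma map_tuple2 (T U : Type) (f : T -> U) x y : map_tuple f [tuple x; y] = [tuple f x; f y].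
Proof. exact: val_inj. Qed.

Lemma conv_lang2_unary (S : Type) (phi : seq A -> S) (Rel : 2.-tuple S -> Prop) u :
  (exists ws, Lambda (fun _ => True) phi Rel ws /\ u = conv ws) <->
  exists m n, u = conv2 m n /\ Rel [tuple phi (nseq m a); phi (nseq n a)].
Proof.
split=> [[ws [[_ Rws] ->]] | [m [n [-> Rmn]]]]; last first.
  by exists [tuple nseq m a; nseq n a]; split=> //; split=> //; rewrite map_tuple2.
exists (size (tnth ws ord0)), (size (tnth ws ord_max)).
by rewrite /conv2 -map_tuple2 -tuple2_unary.
Qed.

Definition accepting (X : nat -> nat -> Prop) (s : option (nat * nat * nat)) : Prop :=
  if s is Some (c, d0, d1) then X (c + d0) (c + d1) else False.

Lemma accepting_conv2 X m n : accepting X (parse (conv2 m n)) = X m n.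
Proof.
rewrite parse_conv2 /=.
by have [-> ->] : minn m n + (m - n) = m /\ minn m n + (n - m) = n by lia.
Qed.

Lemma conv_lang2_accepting (S : Type) (phi : seq A -> S) (Rel : 2.-tuple S -> Prop) u :
  (exists ws, Lambda (fun _ => True) phi Rel ws /\ u = conv ws) <->
  accepting (fun m n => Rel [tuple phi (nseq m a); phi (nseq n a)]) (parse u).
Proof.
rewrite conv_lang2_unary; split=> [[m [n [-> Rmn]]] | ].
  by rewrite accepting_conv2.
case E: (parse u) => [[[c d0] d1] | ] // Rcd; have [zero ->] := parse_inv E.
by exists (c + d0), (c + d1); split=> //; rewrite conv2_blocks; congr blocks; lia.
Qed.

Lemma ult_periodic_of_regular (S : Type) (phi : seq A -> S) (Rel : 2.-tuple S -> Prop) :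
  regular_rel (Lambda (fun _ => True) phi Rel) ->
  exists T p, ult_periodic (fun m n => Rel [tuple phi (nseq m a); phi (nseq n a)]) T p.
Proof.
case=> M accM; exists #|dfa_state M|, #|dfa_state M|`!.
have := ult_periodic_iter_blocks
  (fun q => @dfa_trans _ M q (letter2 true true)) (fun q => @dfa_trans _ M q (letter2 true false))
  (fun q => @dfa_trans _ M q (letter2 false true)) (@dfa_start _ M) (@dfa_final _ M).
apply: ult_periodic_ext => m n.
suff -> : Rel [tuple phi (nseq m a); phi (nseq n a)] <-> dfa_accepts M (conv2 m n).
  by rewrite conv2_blocks /dfa_accepts /blocks !foldl_cat !foldl_nseq.
rewrite -accM conv_lang2_unary.
by split=> [|[m' [n' [/conv2_inj[-> ->] //]]]]; exists m, n.
Qed.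

Definition state_rep (t p : nat) (s : option (nat * nat * nat)) : option (nat * nat * nat) :=
  if s is Some (c, d0, d1) then Some (ult_rep t p c, ult_rep t p d0, ult_rep t p d1) else None.

(* [ult_rep] needs a positive threshold to tell an empty overhang from a nonempty one. *)
Lemma state_rep_parse_step t p s s' l : 0 < t -> state_rep t p s = state_rep t p s' ->
  state_rep t p (parse_step s l) = state_rep t p (parse_step s' l).
Proof.
move=> t_gt0; case: s s' => [[[c d0] d1]|] [[[c' d0'] d1']|] //= [ec e0 e1].
have z0 : (d0 == 0) = (d0' == 0) by rewrite -(@ult_rep_eq0 t p d0 t_gt0) e0 ult_rep_eq0.
have z1 : (d1 == 0) = (d1' == 0) by rewrite -(@ult_rep_eq0 t p d1 t_gt0) e1 ult_rep_eq0.
rewrite /parse_step z0 z1; case: (_ != None); case: (_ != None) => //=;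
  by case: ifP => //= _;
     rewrite ?(ult_rep_succ ec) ?(ult_rep_succ e0) ?(ult_rep_succ e1) ?ec ?e0 ?e1.
Qed.

Lemma accepting_state_rep X t p w :
  ult_periodic X t p -> accepting X (parse w) <-> accepting X (state_rep t p (parse w)).
Proof.
move=> Xper; case E: (parse w) => [[[c d0] d1]|] //=.
case: (parse_inv E) => -[-> | ->] _; rewrite ult_rep0 !addn0; first exact: ult_periodic_rep.
exact: (ult_periodic_rep (ult_periodic_transp Xper)).
Qed.

Lemma regular_of_ult_periodic (S : Type) (phi : seq A -> S) (Rel : 2.-tuple S -> Prop) T p :
  ult_periodic (fun m n => Rel [tuple phi (nseq m a); phi (nseq n a)]) T p ->
  regular_rel (Lambda (fun _ => True) phi Rel).
Proof.
move=> /(ult_periodic_leq (leqnSn T)) Xper; have p_gt0 : 0 < p by case: Xper.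
pose B := T.+1 + p.
pose enc (s : option (nat * nat * nat)) : option ('I_B.+1 * 'I_B.+1 * 'I_B.+1) :=
  if s is Some (c, d0, d1) then Some (inord c, inord d0, inord d1) else None.
pose code u := enc (state_rep T.+1 p (parse u)).
have code_inj u u' :
    code u = code u' -> state_rep T.+1 p (parse u) = state_rep T.+1 p (parse u').
  rewrite /code; case: (parse u) => [[[c d0] d1]|]; case: (parse u') => [[[c' d0'] d1']|] //=.
  case=> /(congr1 (@nat_of_ord _)) + /(congr1 (@nat_of_ord _)) + /(congr1 (@nat_of_ord _)).
  by rewrite !inordK ?ltnS ?(ltnW (ult_rep_lt _ _ p_gt0)) // => -> -> ->.
apply: (@regular_of_finite_congruence _ _ _ code) => [w w' l | w w'] /code_inj eq_red.
  by rewrite /code /parse !foldl_rcons -!/(parse _); congr enc; apply: state_rep_parse_step eq_red.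
by rewrite !conv_lang2_accepting !(accepting_state_rep _ Xper) eq_red.
Qed.

End UnaryConvolution.

Lemma clos_rt_pullback (U S : Type) (f : U -> S) (B : S -> S -> Prop) x y :
  injective f -> (forall s, exists x, f x = s) ->
  clos_refl_trans U (fun x y => B (f x) (f y)) x y <-> clos_refl_trans S B (f x) (f y).
Proof.
move=> f_inj f_surj; split.
  elim=> [u v | u | u v w _ IH1 _ IH2]; last exact: rt_trans IH1 IH2.
    exact: rt_step.
  exact: rt_refl.
suff gen s t : clos_refl_trans S B s t ->
    forall u v, s = f u -> t = f v -> clos_refl_trans U (fun x y => B (f x) (f y)) u v.
  by move=> Cxy; apply: gen Cxy x y erefl erefl.
elim=> [s' t' Bst | s' | s' t' w _ IH1 _ IH2] u v def_s def_t.
- by apply: rt_step; rewrite -def_s -def_t.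
- by rewrite (f_inj u v) -?def_s //; exact: rt_refl.
- by have [z def_z] := f_surj t'; apply: rt_trans (IH1 u z _ _) (IH2 z v _ _).
Qed.

Lemma regular_rel_cast (A : finType) (S : Type) (L : seq A -> Prop) (phi : seq A -> S)
  r (e : r = 2) (Rel : r.-tuple S -> Prop) :
  regular_rel (Lambda L phi Rel) -> regular_rel (Lambda L phi (fun t => Rel (tcast (esym e) t))).
Proof. by subst r. Qed.

Theorem theorem4p1 (sig : signature) (S : Type) (rels : relstruct sig S)
  (A : finType) (phi : seq A -> S)
  (Hpres : injective_unary_FA_presentation rels phi)
  (i : sym sig) (e : arity i = 2) :
  regular_rel (Lambda (fun _ : seq A => True) phi (rt_rel2 (binrel rels e)))
  /\ unary_FA_presentable (aug_struct rels (rt_rel2 (binrel rels e))).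
Proof.
case: Hpres => card_A [L_reg phi_surj eq_reg rels_reg] phi_inj.
have /card1P[a A_a] : #|A| == 1 by rewrite card_A.
have unary x : x = a by have := A_a x; rewrite !inE => /esym/eqP.
pose f m := phi (nseq m a).
have f_inj : injective f by move=> m n /phi_inj/(congr1 size); rewrite !size_nseq.
have f_surj s : exists m, f m = s.
  by have [w [_ <-]] := phi_surj s; exists (size w); rewrite /f -seq_unary.
have [T [p Rper]] := ult_periodic_of_regular unary (regular_rel_cast e (rels_reg i)).
have [T' [p' Rstar_per]] := ult_periodic_clos_rt Rper.
have star_reg : regular_rel (Lambda (fun _ => True) phi (rt_rel2 (binrel rels e))).
  apply: (regular_of_ult_periodic unary (T := T') (p := p')).
  apply: ult_periodic_ext Rstar_per => m n.
  exact: (@clos_rt_pullback nat S f (binrel rels e) m n f_inj f_surj).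
split=> //; exists A, (fun _ => True), phi; split=> //; split=> //.
by case=> [j|] /=; [exact: rels_reg | exact: star_reg].
Qed.
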